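(* Let $N$ be a phylogenetic network on $X\subseteq[n]$ and let $i,j\in[n]$, $i\neq j$. Then $(i,j)$ is a reticulated-cherry of $N$ if and only if $(i,j)$ is a reticulated-cherry of the multiset $\boldsymbol\mu(N)$.
   Context: A (binary) phylogenetic network on a finite set $X\subseteq[n]=\{1,\dots,n\}$ is a directed acyclic graph $N=(V,A)$ without parallel arcs in which every node is exactly one of: the root (indegree 0, outdegree 1; there is exactly one), a leaf (indegree 1, outdegree 0), a tree node (indegree 1, outdegree 2), or a reticulation (indegree 2, outdegree 1); the leaves are identified with the elements of $X$. $V_T(N)$ denotes the set of leaves and tree nodes, $V_H(N)$ the set of reticulations. Paths are directed and trivial paths of length 0 are allowed; $m(u,v)$ denotes the number of directed paths from $u$ to $v$. Extended $\mu$-vectors: for $u\in V$ and $i\in[n]$, $\mu_i(u)=m(u,i)$ (which is $0$ if $i\notin X$), and $\mu_0(u)=\sum_{h\in V_H(N)} m(u,h)$; $\mu(u)=(\mu_0(u),\dots,\mu_n(u))$. The (extended) $\mu$-representation $\boldsymbol\mu(N)$ is the multiset $\{\mu(u)\mid u\in V_T(N)\}$, each vector counted with the number of nodes of $V_T(N)$ having it. For $S\subseteq\{0,\dots,n\}$, $\delta_S$ is the 0/1 indicator vector of $S$ indexed by $0,\dots,n$, and $\delta_{j_1,\dots,j_k}=\delta_{\{j_1,\dots,j_k\}}$. In a network, for distinct leaves $i,j$ with parents $p_i,p_j$, $(i,j)$ is a reticulated-cherry of $N$ if $p_i$ is a reticulation, $p_j$ is a tree node, and $p_j$ is a parent of $p_i$.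 For a finite multiset $\boldsymbol\mu$ of vectors of nonnegative integers indexed by $0,\dots,n$ and distinct $i,j\in[n]$, $(i,j)$ is a reticulated-cherry of $\boldsymbol\mu$ if $\delta_{0,i,j}$ belongs to $\boldsymbol\mu$ with multiplicity exactly $1$, and every element $\mu=(\mu_0,\dots,\mu_n)$ of $\boldsymbol\mu$ other than $\delta_i$ and $\delta_j$ satisfies $\mu_0\ge\mu_i\ge\mu_j$. *)

From mathcomp Require Import all_boot.
Set Implicit Arguments. Unset Strict Implicit. Unset Printing Implicit Defensive.

Section Network.
Variables (V : finType) (A : rel V).
(* A u v : there is an arc u -> v (a relation, so no parallel arcs). *)

Definition indeg (v : V) : nat := #|[pred u | A u v]|.
Definition outdeg (v : V) : nat := #|[pred w | A v w]|.

Definition is_root (v : V) : bool := (indeg v == 0) && (outdeg v == 1).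
Definition is_leaf (v : V) : bool := (indeg v == 1) && (outdeg v == 0).
Definition is_tree (v : V) : bool := (indeg v == 1) && (outdeg v == 2).
Definition is_ret  (v : V) : bool := (indeg v == 2) && (outdeg v == 1).

Definition acyclic : Prop := forall u v, A u v -> ~~ connect A v u.

(* m(u,v): number of directed paths from u to v (trivial path allowed).
   A path with k arcs is a k-tuple of successor vertices; in a DAG its
   k+1 vertices are distinct, so k < #|V| and the sum is exhaustive. *)
Definition npaths (u v : V) : nat :=
  \sum_(k < #|V|) #|[set t : k.-tuple V | path A u t && (last u t == v)]|.

(* Binary phylogenetic network on X = lab @ leaves, X a subset of [n];
   lab identifies leaves injectively with elements of [n]. *)
Definition phylo_network (n : nat) (lab : V -> nat) : Prop :=
  [/\ acyclic,
      forall v, [|| is_root v, is_leaf v, is_tree v | is_ret v],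
      #|[pred v | is_root v]| = 1,
      forall v, is_leaf v -> 0 < lab v <= n &
      {in is_leaf &, injective lab}].

Definition leaf_of (lab : V -> nat) (i : nat) : option V :=
  [pick v | is_leaf v && (lab v == i)].

Definition mu (n : nat) (lab : V -> nat) (u : V) : {ffun 'I_n.+1 -> nat} :=
  [ffun k : 'I_n.+1 =>
     if val k == 0 then \sum_(h | is_ret h) npaths u h
     else if leaf_of lab (val k) is Some l then npaths u l else 0].

(* the multiset mu(N), as a sequence (multiplicity = count_mem) *)
Definition mu_rep (n : nat) (lab : V -> nat) : seq {ffun 'I_n.+1 -> nat} :=
  map (mu n lab) (enum (fun u => is_leaf u || is_tree u)).

Definition ret_cherry_net (lab : V -> nat) (i j : nat) : Prop :=
  exists li lj pi pj : V,
    [/\ is_leaf li /\ lab li = i, is_leaf lj /\ lab lj = j,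
        A pi li /\ is_ret pi, A pj lj /\ is_tree pj & A pj pi].

End Network.

Definition delta (n : nat) (s : seq nat) : {ffun 'I_n.+1 -> nat} :=
  [ffun k : 'I_n.+1 => nat_of_bool (val k \in s)].

Definition ret_cherry_ms (n : nat) (ms : seq {ffun 'I_n.+1 -> nat})
  (i j : 'I_n.+1) : Prop :=
  count_mem (delta n [:: 0; val i; val j]) ms = 1 /\
  forall m, m \in ms -> m != delta n [:: val i] -> m != delta n [:: val j] ->
    (m i <= m ord0) && (m j <= m i).

From mathcomp Require Import all_boot.
Set Implicit Arguments. Unset Strict Implicit. Unset Printing Implicit Defensive.

(* If (i, j) is a reticulated cherry with parents p_i
   (a reticulation) and p_j (a tree node), then mu(p_j) = delta_{0,i,j}; another
   tree node u with this vector reaches p_j, the only parent of j, through one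
   child, while its other child also reaches i or j, giving u two paths to that
   leaf.  Every path to i passes through p_i, every path to j through p_j, and p_j
   is a parent of p_i: hence mu_j <= mu_i <= mu_0 at every node other than i, j.
   Conversely, the node u with mu(u) = delta_{0,i,j} is a tree node whose two
   children each have a single path to leaves, one ending at i and one at j, and
   together a single path to a reticulation.  A non-root node with a single path
   to leaves, ending at l, is l itself when it reaches no reticulation, and a
   reticulation parent of l when it reaches exactly one.  So u has a leaf child
   and a reticulation child above the other leaf; if that leaf were j, a tree node
   reaching the second parent of the reticulation would have more paths to j than
   to i, contradicting mu_j <= mu_i. *)

Section FinPred.
Variable T : finType.
Implicit Types (P : pred T) (a b : T).

Lemma sum_eq_pred P a : \sum_(x | P x) (a == x) = P a.
Proof.
case Pa: (P a); last by rewrite big1 // => x Px; case: eqP => // ax; rewrite ax Px in Pa.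
by rewrite (bigD1 a) //= eqxx big1 // => x /andP[_ /negbTE]; rewrite eq_sym => ->.
Qed.

Lemma card1_pred1 P a : #|P| = 1 -> P a -> P =1 pred1 a.
Proof.
move=> P1 Pa; have [b Pb] := mem_card1 P1.
have /eqP ab : a \in pred1 b by rewrite -Pb.
by move=> x; rewrite -[P x]/(x \in P) Pb ab.
Qed.

Lemma card2_pred2 P a : #|P| = 2 -> P a -> exists2 b, b != a & P =1 pred2 a b.
Proof.
move=> P2 Pa; have := cardD1 a P; rewrite P2 [a \in P]Pa => -[P1].
have [b Pb] := mem_card1 (esym P1).
have /andP[ba Pb'] : b \in [predD1 P & a] by rewrite Pb inE.
exists b => // x; apply/idP/idP => [Px | /orP[] /eqP -> //].
case: (x =P a) => [-> | /eqP xa]; first by rewrite /= eqxx.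
have : x \in [predD1 P & a] by rewrite inE xa.
by rewrite Pb => /eqP ->; rewrite /= eqxx orbT.
Qed.

Lemma big_pred2 (F : T -> nat) P a b : a != b -> P =1 pred2 a b ->
  \sum_(x | P x) F x = F a + F b.
Proof.
move=> ab Pab; rewrite (bigD1 a) /=; last by rewrite Pab /= eqxx.
congr (_ + _); apply: big_pred1 => x /=; rewrite Pab /=.
by case: (x =P b) => [->|_]; rewrite ?orbT ?orbF ?andbN // eq_sym.
Qed.

End FinPred.

Lemma acyclic_sink (T : finType) (e : rel T) (P : pred T) x0 : acyclic e -> P x0 ->
  exists2 w, P w & forall c, e w c -> ~~ P c.
Proof.
move=> acyc Px0; case: (arg_minnP (fun w => #|connect e w|) Px0) => w Pw minw.
exists w => // c ewc; apply/negP => /minw; rewrite leqNgt => /negP; apply.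
apply: proper_card; apply/properP; split.
  by apply/subsetP => y; apply: connect_trans; apply: connect1.
by exists w; rewrite !inE ?connect0 // (negbTE (acyc _ _ ewc)).
Qed.

Section PathCount.
Variables (V : finType) (A : rel V).
Hypothesis acyc : acyclic A.
Implicit Types u v w : V.
Local Notation m := (npaths A).

Definition npaths_len k v w : nat :=
  \sum_(t : k.-tuple V) (path A v t && (last v t == w)).

Lemma npathsE v w : m v w = \sum_(k < #|V|) npaths_len k v w.
Proof.
apply: eq_bigr => k _; rewrite cardsE -sum1_card big_mkcond /=.
by apply: eq_bigr => t _; rewrite unfold_in; case: (_ && _).
Qed.

Lemma npaths_len0 v w : npaths_len 0 v w = (v == w).
Proof. by rewrite /npaths_len (big_pred1 [tuple]) // => t; apply/esym/eqP/tuple0. Qed.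

Lemma npaths_lenS k v w : npaths_len k.+1 v w = \sum_(c | A v c) npaths_len k c w.
Proof.
rewrite /npaths_len (reindex (fun p : V * k.-tuple V => [tuple of p.1 :: p.2])) /=.
  rewrite [RHS]big_mkcond /= (eq_bigr (fun c => \sum_(t : k.-tuple V)
    (A v c && path A c t && (last c t == w)))) ?pair_bigA // => c _.
  by case: (A v c); rewrite // big1.
exists (fun t : k.+1.-tuple V => (thead t, [tuple of behead t])) => [[x t] _|t _].
  by congr pair; apply: val_inj.
by apply: val_inj; case: t => [[|x s]].
Qed.

Lemma npaths_lenSr k v w : npaths_len k.+1 v w = \sum_(p | A p w) npaths_len k v p.
Proof.
elim: k v => [|k IHk] v.
  rewrite npaths_lenS; under eq_bigr => c _ do rewrite npaths_len0 eq_sym.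
  rewrite sum_eq_pred; under eq_bigr => p _ do rewrite npaths_len0.
  by rewrite sum_eq_pred.
rewrite npaths_lenS; under eq_bigr => c _ do rewrite IHk.
by rewrite exchange_big; apply: eq_bigr => p _; rewrite npaths_lenS.
Qed.

Lemma path_uniq v (t : seq V) : path A v t -> uniq (v :: t).
Proof.
elim: t v => [|x t IHt] v //= /andP[Avx xt]; have /= -> := IHt _ xt; rewrite andbT.
by apply/negP => /(path_connect xt); apply/negP/acyc.
Qed.

Lemma npaths_len_card k v w : #|V| <= k -> npaths_len k v w = 0.
Proof.
move=> Vk; rewrite /npaths_len big1 // => t _; case vt: (path A v t) => //=.
have := max_card (mem (v :: t)); rewrite (card_uniqP (path_uniq vt)) /= size_tuple.
by rewrite ltnNge (leq_trans Vk).
Qed.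

(* One more length than necessary, so that the recursions below can shift it. *)
Lemma npaths_extend v w : m v w = \sum_(k < #|V|.+1) npaths_len k v w.
Proof. by rewrite npathsE big_ord_recr /= npaths_len_card ?addn0. Qed.

Lemma npaths_first v w : m v w = (v == w) + \sum_(c | A v c) m c w.
Proof.
rewrite npaths_extend big_ord_recl npaths_len0; congr (_ + _).
rewrite (eq_bigr (fun k : 'I__ => \sum_(c | A v c) npaths_len k c w)) => [|k _].
  by rewrite exchange_big; apply: eq_bigr => c _; rewrite npathsE.
by rewrite /bump /= npaths_lenS.
Qed.

Lemma npaths_last v w : m v w = (v == w) + \sum_(p | A p w) m v p.
Proof.
rewrite npaths_extend big_ord_recl npaths_len0; congr (_ + _).
rewrite (eq_bigr (fun k : 'I__ => \sum_(p | A p w) npaths_len k v p)) => [|k _].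
  by rewrite exchange_big; apply: eq_bigr => p _; rewrite npathsE.
by rewrite /bump /= npaths_lenSr.
Qed.

Lemma npaths_refl v : 0 < m v v.
Proof. by rewrite npaths_first eqxx. Qed.

Lemma leq_npaths_arcl v c w : A v c -> m c w <= m v w.
Proof. by move=> Avc; rewrite (npaths_first v) (bigD1 c) //= addnCA leq_addr. Qed.

Lemma leq_npaths_arcr v p w : A p w -> m v p <= m v w.
Proof. by move=> Apw; rewrite (npaths_last v w) (bigD1 p) //= addnCA leq_addr. Qed.

Lemma leq_npaths_connect u v w : connect A u v -> m v w <= m u w.
Proof.
case/connectP=> t; elim: t u => [|x t IHt] u /= => [_ -> //| /andP[Aux xt] vt].
exact: leq_trans (IHt x xt vt) (leq_npaths_arcl _ Aux).
Qed.

Lemma npaths_gt0 v w : (0 < m v w) = connect A v w.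
Proof.
apply/idP/idP => [|vw]; last exact: leq_trans (npaths_refl w) (leq_npaths_connect _ vw).
rewrite lt0n sum_nat_eq0 => /forallPn[k]; rewrite cardsE -lt0n => /card_gt0P[t].
by rewrite unfold_in => /andP[vt /eqP wt]; apply/connectP; exists t.
Qed.

Lemma npaths_pred2_children u a b w : a != b -> A u =1 pred2 a b -> u != w ->
  m u w = m a w + m b w.
Proof. by move=> ab Au uw; rewrite npaths_first (big_pred2 _ ab Au) (negbTE uw). Qed.

Lemma npaths_pred2_parents u v p q : p != q -> A^~ v =1 pred2 p q -> u != v ->
  m u v = m u p + m u q.
Proof. by move=> pq Av uv; rewrite npaths_last (big_pred2 _ pq Av) (negbTE uv). Qed.

Lemma npaths_pred1_child v c w : A v =1 pred1 c -> m v w = (v == w) + m c w.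
Proof. by move=> Av; rewrite npaths_first (big_pred1 c). Qed.

Lemma npaths_pred1_parent u v p : A^~ v =1 pred1 p -> u != v -> m u v = m u p.
Proof. by move=> Av uv; rewrite npaths_last (big_pred1 p) // (negbTE uv). Qed.

Lemma connect_step v w : connect A v w -> v != w -> exists2 c, A v c & connect A c w.
Proof.
case/connectP=> [[|c t]] /= => [_ -> | /andP[Avc ct] wt]; first by rewrite eqxx.
by exists c => //; apply/connectP; exists t.
Qed.

End PathCount.

Section Network.
Variables (V : finType) (A : rel V) (n : nat) (lab : V -> nat).
Hypothesis acyc : acyclic A.
Hypothesis node_class : forall v, [|| is_root A v, is_leaf A v, is_tree A v | is_ret A v].
Hypothesis root_unique : #|[pred v | is_root A v]| = 1.
Hypothesis lab_range : forall v, is_leaf A v -> 0 < lab v <= n.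
Hypothesis lab_inj : {in is_leaf A &, injective lab}.
Local Notation m := (npaths A).
Local Notation mu := (mu A n lab).

Lemma leaf_arcF l c : is_leaf A l -> A l c = false.
Proof. by case/andP=> _ /eqP/card0_eq/(_ c); rewrite !inE. Qed.

Lemma root_arcF r p : is_root A r -> A p r = false.
Proof. by case/andP=> /eqP/card0_eq/(_ p); rewrite !inE. Qed.

Lemma arc_nonroot p c : A p c -> ~~ is_root A c.
Proof. by apply: contraTN => /(root_arcF p) ->. Qed.

Lemma leaf_parentE l p : is_leaf A l -> A p l -> A^~ l =1 pred1 p.
Proof. by case/andP=> /eqP l1 _; apply: card1_pred1. Qed.

Lemma ret_childE h c : is_ret A h -> A h c -> A h =1 pred1 c.
Proof. by case/andP=> _ /eqP h1; apply: card1_pred1. Qed.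

Lemma ret_parentsP h p : is_ret A h -> A p h -> exists2 q, q != p & A^~ h =1 pred2 p q.
Proof. by case/andP=> /eqP h2 _; apply: card2_pred2. Qed.

Lemma tree_childrenP u c : is_tree A u -> A u c ->
  exists2 c', c' != c & A u =1 pred2 c c'.
Proof. by case/andP=> _ /eqP u2; apply: card2_pred2. Qed.

Lemma tree_child u : is_tree A u -> exists c, A u c.
Proof.
case/andP=> _ /eqP u2; have : 0 < outdeg A u by rewrite u2.
by case/card_gt0P=> c; exists c.
Qed.

Lemma ret_child h : is_ret A h -> exists c, A h c.
Proof.
case/andP=> _ /eqP h1; have : 0 < outdeg A h by rewrite h1.
by case/card_gt0P=> c; exists c.
Qed.

Lemma leaf_retF x : is_leaf A x -> is_ret A x = false.
Proof. by case/andP=> /eqP x1 _; rewrite /is_ret x1. Qed.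

Lemma tree_leafF x : is_tree A x -> is_leaf A x = false.
Proof. by case/andP=> _ /eqP x2; rewrite /is_leaf x2 andbF. Qed.

Lemma tree_retF x : is_tree A x -> is_ret A x = false.
Proof. by case/andP=> /eqP x1 _; rewrite /is_ret x1. Qed.

Lemma tree_neq u x : is_tree A u -> is_leaf A x || is_ret A x -> u != x.
Proof. by move=> Tu; apply: contraTneq => <-; rewrite tree_leafF ?tree_retF. Qed.

Lemma npaths_leaf l w : is_leaf A l -> m l w = (l == w).
Proof.
by move=> Ll; rewrite npaths_first // big_pred0 ?addn0 // => c; apply: leaf_arcF.
Qed.

Lemma leaf_connect l v : is_leaf A l -> connect A l v -> v = l.
Proof. by move=> Ll; rewrite -npaths_gt0 // npaths_leaf // lt0b => /eqP. Qed.

Definition nret u : nat := \sum_(h | is_ret A h) m u h.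

Lemma leq_npaths_nret u h : is_ret A h -> m u h <= nret u.
Proof. by move=> Rh; rewrite /nret (bigD1 h) //= leq_addr. Qed.

Lemma nret_leaf l : is_leaf A l -> nret l = 0.
Proof.
move=> Ll; rewrite /nret; under eq_bigr => h _ do rewrite npaths_leaf //.
by rewrite sum_eq_pred leaf_retF.
Qed.

Lemma exists_leaf_connect v : exists2 l, is_leaf A l & connect A v l.
Proof.
have [l vl lF] := acyclic_sink acyc (connect0 A v); exists l => //.
have l0 : outdeg A l = 0.
  apply: eq_card0 => c; rewrite !inE; apply/negP => Alc.
  by have /negP := lF c Alc; apply; apply: connect_trans vl (connect1 Alc).
by have := node_class l; rewrite /is_root /is_tree /is_ret l0 !andbF /= orbF.
Qed.

Lemma root_connect r v : is_root A r -> connect A r v.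
Proof.
move=> Rr; have acyc_rev : acyclic [rel x y | A y x].
  by move=> x y /= Ayx; rewrite connect_rev; apply: acyc.
have [s sv sF] := acyclic_sink acyc_rev (connect0 [rel x y | A y x] v).
have Rs : is_root A s.
  have s0 : indeg A s = 0.
    apply: eq_card0 => p; rewrite !inE; apply/negP => Aps.
    by have /negP := sF p Aps; apply; apply: connect_trans sv (connect1 Aps).
  by have := node_class s; rewrite /is_leaf /is_tree /is_ret s0 /= orbF.
have /eqP <- : s == r by rewrite -[_ == _](card1_pred1 root_unique Rr).
by rewrite connect_rev in sv.
Qed.

Lemma root_child_retF r x : is_root A r -> A r x -> is_ret A x = false.
Proof.
move=> Rr Arx; apply/negbTE/negP => Rx; have [y yr Ax] := ret_parentsP Rx Arx.
have Ayx : A y x by rewrite Ax /= eqxx orbT.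
have [c Arc cy] := connect_step (root_connect y Rr) (contra_neq esym yr).
have /eqP cx : c == x.
  by move: Rr => /andP[_ /eqP r1]; rewrite -[_ == _](card1_pred1 r1 Arx).
by move: (acyc Ayx); rewrite -cx cy.
Qed.

Lemma exists_tree_connect q : ~~ is_root A q -> ~~ is_leaf A q ->
  exists2 x, is_tree A x & connect A x q.
Proof.
move=> Rq Lq; have : 0 < #|[pred v | is_root A v]| by rewrite root_unique.
case/card_gt0P=> r Rr; have rq : r != q by apply: contraNneq Rq => <-.
have [x Arx xq] := connect_step (root_connect q Rr) rq.
have /negbTE Rx := arc_nonroot Arx.
have /negbTE Lx : ~~ is_leaf A x by apply: contra Lq => Lx; rewrite (leaf_connect Lx xq).
by exists x => //; have := node_class x; rewrite Rx Lx (root_child_retF Rr Arx) orbF.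
Qed.

Lemma leaf_lab_eq x y : is_leaf A x -> is_leaf A y -> (lab x == lab y) = (x == y).
Proof. by move=> Lx Ly; apply: (inj_in_eq lab_inj). Qed.

Lemma neq_lab x y (i j : 'I_n.+1) : lab x = i -> lab y = j -> i != j -> x != y.
Proof.
by move=> xi yj; apply: contraNneq => xy; apply/eqP/val_inj; rewrite /= -xi -yj xy.
Qed.

Lemma leaf_lab_neq0 x : is_leaf A x -> lab x != 0.
Proof. by case/lab_range/andP => /lt0n_neq0. Qed.

Lemma inord_labK x : is_leaf A x -> val (inord (lab x) : 'I_n.+1) = lab x.
Proof. by case/lab_range/andP=> _ xn; apply: inordK. Qed.

Lemma delta_lab s x : is_leaf A x -> delta n s (inord (lab x)) = (lab x \in s).
Proof. by move=> Lx; rewrite ffunE inord_labK. Qed.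

Lemma mu_ord0 u : mu u ord0 = nret u.
Proof. by rewrite ffunE. Qed.

Lemma mu_lab u x : is_leaf A x -> mu u (inord (lab x)) = m u x.
Proof.
move=> Lx; rewrite ffunE inord_labK // (negbTE (leaf_lab_neq0 Lx)) /leaf_of.
case: pickP => [y /andP[Ly /eqP yx] | /(_ x)]; last by rewrite Lx eqxx.
by have /eqP -> : y == x by rewrite -leaf_lab_eq ?yx.
Qed.

Lemma mu_unlabelled u (k : 'I_n.+1) :
  0 < k -> (forall x, is_leaf A x -> lab x != k) -> mu u k = 0.
Proof.
move=> k0 nl; rewrite ffunE (negbTE (lt0n_neq0 k0)) /leaf_of.
by case: pickP => [x /andP[Lx /eqP xk] | //]; have := nl x Lx; rewrite xk eqxx.
Qed.

Variant mu_index_spec : 'I_n.+1 -> Type :=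
| MuIndexRet : mu_index_spec ord0
| MuIndexLeaf x of is_leaf A x : mu_index_spec (inord (lab x))
| MuIndexFree (k : 'I_n.+1) of 0 < k & (forall x, is_leaf A x -> lab x != k) :
    mu_index_spec k.

Lemma mu_indexP k : mu_index_spec k.
Proof.
case: (posnP k) => [k0 | k0].
  by rewrite (_ : k = ord0); [constructor | apply: val_inj].
case: (pickP (fun x => is_leaf A x && (lab x == k))) => [x /andP[Lx /eqP xk] | nl].
  by rewrite -[k]inord_val -xk; constructor.
by constructor => // x Lx; move: (nl x); rewrite /= Lx => /negbT.
Qed.

Lemma mu_labelled u (k : 'I_n.+1) : 0 < k -> mu u k != 0 ->
  exists2 x, is_leaf A x & lab x = k.
Proof.
case: (mu_indexP k) => [|x Lx _ _|{}k k0 nl _]; last by rewrite mu_unlabelled ?eqxx.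
  by rewrite ltnn.
by exists x; rewrite ?inord_labK.
Qed.

Lemma mu_leaf x : is_leaf A x -> mu x = delta n [:: lab x].
Proof.
move=> Lx; apply/ffunP => k.
case: (mu_indexP k) => [|y Ly|{}k k0 nl]; rewrite ?mu_ord0 ?mu_lab ?mu_unlabelled //.
- by rewrite nret_leaf // ffunE inE eq_sym (negbTE (leaf_lab_neq0 Lx)).
- by rewrite delta_lab // inE npaths_leaf // leaf_lab_eq // eq_sym.
- by rewrite ffunE inE eq_sym (negbTE (nl x Lx)).
Qed.

Lemma mu_repP d :
  reflect (exists2 u, is_leaf A u || is_tree A u & d = mu u) (d \in mu_rep A n lab).
Proof. by apply: (iffP mapP) => -[u Pu ->]; exists u; rewrite ?mem_enum in Pu *. Qed.

Lemma count_mu_rep1 d u : is_leaf A u || is_tree A u -> mu u = d ->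
  (forall v, is_leaf A v || is_tree A v -> mu v = d -> v = u) ->
  count_mem d (mu_rep A n lab) = 1.
Proof.
move=> Pu ud uniq_u; rewrite /mu_rep count_map.
rewrite (@eq_in_count _ _ (pred1 u)) => [|v]; last first.
  by rewrite mem_enum /= => Pv; apply/eqP/eqP => [|->] //; apply: uniq_u.
by rewrite (count_uniq_mem _ (enum_uniq _)) mem_enum unfold_in /= Pu.
Qed.

Definition cherry_profile u li lj : Prop :=
  nret u = 1 /\ forall x, is_leaf A x -> m u x = (x == li) || (x == lj).

Lemma mu_cherryE u li lj : is_leaf A li -> is_leaf A lj ->
  mu u = delta n [:: 0; lab li; lab lj] <-> cherry_profile u li lj.
Proof.
move=> Lli Llj; have delta_cherry x : is_leaf A x ->
    delta n [:: 0; lab li; lab lj] (inord (lab x)) = (x == li) || (x == lj).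
  by move=> Lx; rewrite delta_lab // !inE (negbTE (leaf_lab_neq0 Lx)) !leaf_lab_eq.
split=> [mu_u | [ret1 leaves]].
  split=> [|x Lx]; first by rewrite -mu_ord0 mu_u ffunE.
  by rewrite -mu_lab // mu_u delta_cherry.
apply/ffunP => k; case: (mu_indexP k) => [|x Lx|{}k k0 nl].
- by rewrite mu_ord0 ret1 ffunE.
- by rewrite mu_lab // delta_cherry // leaves.
rewrite mu_unlabelled // ffunE !inE (negbTE (lt0n_neq0 k0)).
by rewrite ![_ == lab _]eq_sym (negbTE (nl _ Lli)) (negbTE (nl _ Llj)).
Qed.

Lemma cherry_profile_tree u li lj : is_leaf A u || is_tree A u ->
  cherry_profile u li lj -> is_tree A u.
Proof. by case/orP=> // Lu [ret1 _]; move: ret1; rewrite nret_leaf. Qed.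

Section NetworkCherry.
Variables li lj pi pj : V.
Hypotheses (Lli : is_leaf A li) (Llj : is_leaf A lj) (lilj : li != lj).
Hypotheses (Api : A pi li) (Rpi : is_ret A pi).
Hypotheses (Apj : A pj lj) (Tpj : is_tree A pj) (Apjpi : A pj pi).

Lemma cherry_profile_parent : cherry_profile pj li lj.
Proof.
have ljpi : lj != pi by apply: contraTneq Rpi => <-; rewrite leaf_retF.
have [c' _ Apj2] := tree_childrenP Tpj Apj.
have pic' : pi = c'.
  by move: (Apj2 pi); rewrite Apjpi /= eq_sym (negbTE ljpi) => /esym/eqP.
have pj_paths w : is_leaf A w || is_ret A w ->
    m pj w = (lj == w) + ((pi == w) + (li == w)).
  move=> Pw; rewrite (npaths_pred2_children acyc _ Apj2 (tree_neq Tpj Pw)) -?pic' //.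
  by rewrite (npaths_pred1_child acyc _ (ret_childE Rpi Api)) !npaths_leaf.
split=> [|x Lx].
  rewrite /nret (eq_bigr _ (fun h Rh => pj_paths h (introT orP (or_intror Rh)))).
  by rewrite !big_split /= !sum_eq_pred Rpi !leaf_retF.
rewrite pj_paths ?Lx // (_ : pi == x = false) /=.
  by rewrite ![_ == x]eq_sym; case: (x =P li) => [->|]; rewrite ?(negbTE lilj) ?addn0.
by apply: contraTF Rpi => /eqP ->; rewrite leaf_retF.
Qed.

Lemma cherry_parent_unique u : is_tree A u -> cherry_profile u li lj -> u = pj.
Proof.
move=> Tu [_ u_leaf]; have [_ pj_leaf] := cherry_profile_parent.
have upj : connect A u pj.
  rewrite -npaths_gt0 // -(npaths_pred1_parent acyc (leaf_parentE Llj Apj)).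
    by rewrite u_leaf // eqxx orbT.
  by rewrite tree_neq ?Llj.
case: (eqVneq u pj) => // /(connect_step upj)[c Auc cpj].
have [c' c'c Au2] := tree_childrenP Tu Auc; have cc' : c != c' by rewrite eq_sym.
have [x Lx c'x] := exists_leaf_connect c'.
have ux : m u x = m c x + m c' x.
  by rewrite (npaths_pred2_children acyc cc' Au2) // tree_neq ?Lx.
have c'x_gt0 : 0 < m c' x by rewrite npaths_gt0.
have x_cherry : (x == li) || (x == lj).
  by rewrite -[_ || _]lt0b -(u_leaf x) // ux addn_gt0 c'x_gt0 orbT.
have := leq_add (leq_npaths_connect acyc x cpj) c'x_gt0.
by rewrite pj_leaf // x_cherry -ux u_leaf // x_cherry.
Qed.

Lemma cherry_order u : u != li -> u != lj -> m u lj <= m u li <= nret u.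
Proof.
move=> uli ulj; rewrite (npaths_pred1_parent acyc (leaf_parentE Lli Api)) //.
rewrite (npaths_pred1_parent acyc (leaf_parentE Llj Apj)) //.
by rewrite leq_npaths_arcr // leq_npaths_nret.
Qed.

Lemma ret_cherry_net_ms (i j : 'I_n.+1) : lab li = val i -> lab lj = val j ->
  ret_cherry_ms (mu_rep A n lab) i j.
Proof.
move=> li_i lj_j; have mu_cherry u :
    mu u = delta n [:: 0; val i; val j] <-> cherry_profile u li lj.
  by rewrite -li_i -lj_j; apply: mu_cherryE.
split.
  apply: (count_mu_rep1 (u := pj)); first by rewrite Tpj orbT.
    exact/mu_cherry/cherry_profile_parent.
  move=> v Pv /mu_cherry v_cherry.
  exact/cherry_parent_unique/v_cherry/cherry_profile_tree/v_cherry.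
move=> d /mu_repP[u Pu ->] ni nj.
have uli : u != li by apply: contraNneq ni => ->; rewrite mu_leaf // li_i.
have ulj : u != lj by apply: contraNneq nj => ->; rewrite mu_leaf // lj_j.
rewrite -[i]inord_val -[j]inord_val -li_i -lj_j !mu_lab // mu_ord0.
by rewrite andbC; apply: cherry_order.
Qed.

End NetworkCherry.

Definition unique_leaf_path w l : Prop := forall x, is_leaf A x -> m w x = (x == l).

Lemma unique_leaf_path_ret w l : is_leaf A l -> ~~ is_root A w ->
  unique_leaf_path w l -> w != l -> is_ret A w.
Proof.
move=> Ll Rw wl1 wl; have := node_class w; rewrite (negbTE Rw) /=.
case Lw: (is_leaf A w); first by have := npaths_refl acyc w; rewrite wl1 // (negbTE wl).
case Tw: (is_tree A w) => //= _.
have [c Awc] := tree_child Tw; have [c' c'c Aw2] := tree_childrenP Tw Awc.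
have cc' : c != c' by rewrite eq_sym.
have Awc' : A w c' by rewrite Aw2 /= eqxx orbT.
have child_l d : A w d -> 0 < m d l.
  move=> Awd; have [x Lx dx] := exists_leaf_connect d.
  have : 0 < m w x by rewrite (leq_trans _ (leq_npaths_arcl acyc x Awd)) ?npaths_gt0.
  by rewrite wl1 // lt0b => /eqP xl; rewrite -xl npaths_gt0.
have := leq_add (child_l c Awc) (child_l c' Awc').
by rewrite -(npaths_pred2_children acyc cc' Aw2 wl) wl1 ?eqxx.
Qed.

Lemma unique_leaf_path_nret0 w l : is_leaf A l -> ~~ is_root A w ->
  unique_leaf_path w l -> nret w = 0 -> w = l.
Proof.
move=> Ll Rw wl1; move/eqP; apply: contraTeq => wl; rewrite -lt0n.
rewrite (leq_trans (npaths_refl acyc w)) // leq_npaths_nret //.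
exact: unique_leaf_path_ret Ll Rw wl1 wl.
Qed.

Lemma unique_leaf_path_nret1 w l : is_leaf A l -> ~~ is_root A w ->
  unique_leaf_path w l -> nret w = 1 -> is_ret A w /\ A w l.
Proof.
move=> Ll Rw wl1 w1; have wl : w != l by apply/eqP => wl; move: w1; rewrite wl nret_leaf.
have Rw' := unique_leaf_path_ret Ll Rw wl1 wl; have [d Awd] := ret_child Rw'.
have w_paths y : m w y = (w == y) + m d y.
  by rewrite (npaths_pred1_child acyc _ (ret_childE Rw' Awd)).
have d0 : nret d = 0.
  move: w1; rewrite /nret; under eq_bigr => h _ do rewrite w_paths.
  by rewrite big_split /= sum_eq_pred Rw' => -[].
suff <- : d = l by [].
apply: unique_leaf_path_nret0 Ll (arc_nonroot Awd) _ d0.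
move=> x Lx; rewrite -wl1 // w_paths (_ : w == x = false) //.
by apply: contraTF Rw' => /eqP ->; rewrite leaf_retF.
Qed.

Lemma tree_cherry_children u li lj : is_leaf A li -> is_leaf A lj -> is_tree A u ->
  cherry_profile u li lj ->
  exists a b, [/\ a != b, A u =1 pred2 a b, connect A a li & connect A b lj].
Proof.
move=> Lli Llj Tu [_ u_leaf].
have [c1 Auc1] := tree_child Tu; have [c2 c21 Au2] := tree_childrenP Tu Auc1.
have c12 : c1 != c2 by rewrite eq_sym.
have Auc2 : A u c2 by rewrite Au2 /= eqxx orbT.
have reach c : A u c -> exists2 x, (x == li) || (x == lj) & connect A c x.
  move=> Auc; have [x Lx cx] := exists_leaf_connect c; exists x => //.
  rewrite -[_ || _]lt0b -u_leaf //.
  by rewrite (leq_trans _ (leq_npaths_arcl acyc x Auc)) ?npaths_gt0.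
have not_both x : is_leaf A x -> connect A c1 x -> connect A c2 x -> False.
  move=> Lx; rewrite -!npaths_gt0 // => c1x c2x; have := leq_add c1x c2x.
  rewrite -(npaths_pred2_children acyc c12 Au2) ?tree_neq ?Lx //.
  by rewrite u_leaf //; case: (_ || _).
have [x1 /orP[] /eqP-> c1x] := reach c1 Auc1;
  have [x2 /orP[] /eqP-> c2x] := reach c2 Auc2.
- by case: (not_both li Lli c1x c2x).
- by exists c1, c2.
- by exists c2, c1; split=> // y; rewrite Au2 /= orbC.
- by case: (not_both lj Llj c1x c2x).
Qed.

Lemma cherry_children_paths u a b li lj : is_tree A u -> li != lj ->
  cherry_profile u li lj -> a != b -> A u =1 pred2 a b ->
  connect A a li -> connect A b lj ->
  [/\ unique_leaf_path a li, unique_leaf_path b lj & nret a + nret b = 1].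
Proof.
move=> Tu lilj [u1 u_leaf] ab Au2; rewrite -!npaths_gt0 // => ali blj.
have u_split w : is_leaf A w || is_ret A w -> m u w = m a w + m b w.
  by move=> Pw; rewrite (npaths_pred2_children acyc ab Au2 (tree_neq Tu Pw)).
have leaf_split x : is_leaf A x -> m a x = (x == li) /\ m b x = (x == lj).
  move=> Lx; move: (u_leaf x Lx); rewrite u_split ?Lx // => /eqP.
  case: (x =P li) => [->|_]; [|case: (x =P lj) => [->|_]].
  - rewrite (negbTE lilj) /= addn_eq1 [m a li == 0]eqn0Ngt ali /= orbF.
    by case/andP=> /eqP -> /eqP ->.
  - rewrite /= addn_eq1 [m b lj == 0]eqn0Ngt blj andbF /=.
    by case/andP=> /eqP -> /eqP ->.
  by rewrite /= addn_eq0 => /andP[/eqP -> /eqP ->].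
split=> [x Lx | x Lx |]; try by case: (leaf_split x Lx).
by rewrite -u1 /nret -big_split; apply: eq_bigr => h Rh; rewrite u_split ?Rh ?orbT.
Qed.

Lemma cherry_profile_cases u li lj : is_leaf A li -> is_leaf A lj -> li != lj ->
  is_tree A u -> cherry_profile u li lj ->
  (exists r, [/\ A u r, is_ret A r, A r li & A u lj]) \/
  (exists r, [/\ A u r, is_ret A r, A r lj & A u li]).
Proof.
move=> Lli Llj lilj Tu u_cherry.
have [a [b [ab Au2 ali blj]]] := tree_cherry_children Lli Llj Tu u_cherry.
have [a_li b_lj nret_ab] := cherry_children_paths Tu lilj u_cherry ab Au2 ali blj.
have [Aua Aub] : A u a /\ A u b by rewrite !Au2 /= !eqxx orbT.
case ea: (nret a) nret_ab => [|[|k]] // nret_ab.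
  right; have [Rb Ablj] := unique_leaf_path_nret1 Llj (arc_nonroot Aub) b_lj nret_ab.
  by exists b; rewrite -(unique_leaf_path_nret0 Lli (arc_nonroot Aua) a_li ea).
left; have [Ra Aali] := unique_leaf_path_nret1 Lli (arc_nonroot Aua) a_li ea.
have b0 : nret b = 0 by case: nret_ab.
by exists a; rewrite -(unique_leaf_path_nret0 Llj (arc_nonroot Aub) b_lj b0).
Qed.

(* The configuration excluded by the order condition on the mu-representation. *)
Lemma tree_ret_sibling u li lj r : is_leaf A li -> is_leaf A lj -> is_tree A u ->
  A u li -> A u r -> is_ret A r -> A r lj ->
  exists x, [/\ is_tree A x, 0 < nret x & m x li < m x lj].
Proof.
move=> Lli Llj Tu Auli Aur Rr Arlj; have [q qu Ar2] := ret_parentsP Rr Aur.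
have uq : u != q by rewrite eq_sym.
have Aqr : A q r by rewrite Ar2 /= eqxx orbT.
have [x Tx xq] : exists2 x, is_tree A x & connect A x q.
  apply: exists_tree_connect; last by apply: contraTN Aqr => /leaf_arcF ->.
  by apply: contraTN Rr => Rq; rewrite (root_child_retF Rq Aqr).
have xq_gt0 : 0 < m x q by rewrite npaths_gt0.
exists x; split=> //.
  rewrite (leq_trans xq_gt0) //.
  by rewrite (leq_trans (leq_npaths_arcr acyc x Aqr)) ?leq_npaths_nret.
rewrite (npaths_pred1_parent acyc (leaf_parentE Lli Auli)) ?tree_neq ?Lli //.
rewrite (npaths_pred1_parent acyc (leaf_parentE Llj Arlj)) ?tree_neq ?Llj //.
rewrite (npaths_pred2_parents acyc uq Ar2) ?tree_neq ?Rr ?orbT //.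
by rewrite -{1}(addn0 (m x u)) ltn_add2l.
Qed.

Lemma ret_cherry_ms_net (i j : 'I_n.+1) : 0 < val i -> 0 < val j -> i != j ->
  ret_cherry_ms (mu_rep A n lab) i j -> ret_cherry_net A lab (val i) (val j).
Proof.
move=> i0 j0 ij [count1 order].
have [u Pu mu_u] : exists2 u, is_leaf A u || is_tree A u &
    mu u = delta n [:: 0; val i; val j].
  have : delta n [:: 0; val i; val j] \in mu_rep A n lab.
    by rewrite -has_pred1 has_count count1.
  by case/mu_repP=> u Pu ->; exists u.
have [li Lli li_i] : exists2 li, is_leaf A li & lab li = i.
  by apply: (mu_labelled (u := u)); rewrite // mu_u ffunE !inE eqxx orbT.
have [lj Llj lj_j] : exists2 lj, is_leaf A lj & lab lj = j.
  by apply: (mu_labelled (u := u)); rewrite // mu_u ffunE !inE eqxx !orbT.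
have lilj := neq_lab li_i lj_j ij.
have u_cherry : cherry_profile u li lj by apply/(mu_cherryE u); rewrite // li_i lj_j.
have Tu := cherry_profile_tree Pu u_cherry.
case: (cherry_profile_cases Lli Llj lilj Tu u_cherry) => -[r [Aur Rr Arl Aul]].
  by exists li, lj, r, u.
have [x [Tx x_ret x_lt]] := tree_ret_sibling Lli Llj Tu Aul Aur Rr Arl.
have x_delta k : 0 < k -> mu x != delta n [:: k].
  move=> k0; apply: contraTneq x_ret => mu_x.
  by rewrite -(mu_ord0 x) mu_x ffunE inE /= lt0b eq_sym -lt0n.
have Px : mu x \in mu_rep A n lab by apply/mu_repP; exists x; rewrite ?Tx ?orbT.
have /andP[_] := order _ Px (x_delta _ i0) (x_delta _ j0).
by rewrite -[i]inord_val -[j]inord_val -li_i -lj_j !mu_lab // leqNgt x_lt.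
Qed.

End Network.

Theorem mainTheorem4 (n : nat) (V : finType) (A : rel V) (lab : V -> nat) :
  phylo_network A n lab ->
  forall i j : 'I_n.+1, 0 < val i -> 0 < val j -> i != j ->
  ret_cherry_net A lab (val i) (val j) <-> ret_cherry_ms (mu_rep A n lab) i j.
Proof.
case=> acyc node_class root_unique lab_range lab_inj i j i0 j0 ij; split.
  case=> li [lj [pi [pj [[Lli li_i] [Llj lj_j] [Api Rpi] [Apj Tpj] Apjpi]]]].
  exact: (ret_cherry_net_ms acyc node_class lab_range lab_inj Lli Llj
    (neq_lab li_i lj_j ij) Api Rpi Apj Tpj Apjpi li_i lj_j).
exact: ret_cherry_ms_net.
Qed.
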